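(* Let $k,r\ge 0$ and let $T$ be a tree with $n\le 2^r+2$ vertices and $l<k$ leaves, precolored so that its colored vertices are exactly its leaves, where this coloring of the leaves does not extend to a proper 3-coloring of $T$. Then Spoiler has a winning strategy in $\mathcal{G}^k_r(T)$.
   Context: Colors are red, blue, green; a coloring is proper if adjacent vertices get different colors. A $k$-precolored graph is a finite graph together with an assignment of colors to at most $k$ of its vertices. The game $\mathcal{G}^k_r(H)$ on a $k$-precolored graph $H$ starts from the given precoloring and lasts $r$ rounds; in each round Spoiler may erase the colors of some currently colored vertices and then selects a vertex, which Duplicator colors with one of the three colors; after each round at most $k$ vertices may be colored. Duplicator wins if the initial partial coloring and the partial coloring after each round are proper; otherwise Spoiler wins. *)

From mathcomp Require Import all_boot.
Set Implicit Arguments. Unset Strict Implicit. Unset Printing Implicit Defensive.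

(* A finite simple graph on a finType V is given by a symmetric irreflexive
   relation e : rel V. A partial colouring is a map V -> option 'I_3
   (None = uncoloured). *)

Definition color := 'I_3.
Definition pcoloring (V : finType) := V -> option color.

Definition connected_graph (V : finType) (e : rel V) : Prop :=
  forall x y : V, connect e x y.

Definition acyclic_graph (V : finType) (e : rel V) : Prop :=
  forall c : seq V, uniq c -> 3 <= size c -> ~~ cycle e c.

Definition is_tree (V : finType) (e : rel V) : Prop :=
  connected_graph e /\ acyclic_graph e.

Definition is_leaf (V : finType) (e : rel V) (x : V) : bool :=
  #|[pred y | e x y]| == 1.

Definition num_leaves (V : finType) (e : rel V) : nat :=
  #|[pred x | is_leaf e x]|.

Definition num_colored (V : finType) (c : pcoloring V) : nat :=
  #|[pred x | c x != None]|.

Definition proper_pc (V : finType) (e : rel V) (c : pcoloring V) : Prop :=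
  forall x y a b, e x y -> c x = Some a -> c y = Some b -> a <> b.

Definition erasure_of (V : finType) (c c' : pcoloring V) : Prop :=
  forall x, c' x = c x \/ c' x = None.

Definition set_color (V : finType) (c : pcoloring V) (v : V) (a : color)
  : pcoloring V := fun x => if x == v then Some a else c x.

(* Spoiler has a winning strategy in the game G^k_r started from the
   partial colouring c: either c is already improper, or r > 0 and Spoiler
   has a legal move (erase some colours, select a vertex v, such that at
   most k vertices are coloured after v is coloured) such that for every
   colour Duplicator assigns to v, Spoiler wins the remaining r-1 rounds. *)
Fixpoint spoiler_wins (V : finType) (e : rel V) (k r : nat) (c : pcoloring V)
  : Prop :=
  ~ proper_pc e c \/
  match r with
  | 0 => False
  | r'.+1 =>
      exists (c' : pcoloring V) (v : V),
        erasure_of c c' /\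
        (forall a, num_colored (set_color c' v a) <= k) /\
        (forall a, spoiler_wins e k r' (set_color c' v a))
  end.

Definition extends (V : finType) (f : V -> color) (c : pcoloring V) : Prop :=
  forall x a, c x = Some a -> f x = a.

Definition proper_total (V : finType) (e : rel V) (f : V -> color) : Prop :=
  forall x y, e x y -> f x <> f y.

(* In an acyclic graph, call S an obstruction for a partial colouring c if c
   has no proper extension to the subgraph induced by S, and minimal if no
   obstruction inside S is smaller.  Spoiler
   keeps only the colours of S and asks for a centroid v (all branches of size
   at most |S|/2).  Then v is uncoloured, and whatever Duplicator answers,
   gluing gives an obstruction of size at most |S|/2 + 1 with no more coloured
   vertices. *)

From mathcomp Require Import all_boot.
From mathcomp Require Import zify.
From Stdlib Require Import Classical ClassicalEpsilon.
Set Implicit Arguments. Unset Strict Implicit. Unset Printing Implicit Defensive.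

Section ForestGame.
Variables (V : finType) (e : rel V).
Hypothesis e_sym : symmetric e.
Hypothesis e_irr : irreflexive e.
Hypothesis e_acy : acyclic_graph e.

Implicit Types (A B C D S : {set V}) (c : pcoloring V).

Lemma edge_neq x y : e x y -> x != y.
Proof. by move=> exy; apply/eqP => xy; rewrite xy e_irr in exy. Qed.

Lemma neighbor_D1 S x y : x \in S -> e y x -> x \in S :\ y.
Proof. by move=> xS eyx; rewrite !inE xS andbT eq_sym edge_neq. Qed.

Definition induced A : rel V := fun x y => [&& x \in A, y \in A & e x y].

Lemma induced_sym A : symmetric (induced A).
Proof. by move=> x y; rewrite /induced andbCA e_sym. Qed.

Lemma induced_edge A : subrel (induced A) e.
Proof. by move=> x y /and3P[]. Qed.

Lemma connect_induced_mono A B x y : A \subset B ->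
  connect (induced A) x y -> connect (induced B) x y.
Proof.
move=> sAB; apply: connect_sub => {}x {}y /and3P[xA yA exy]; apply: connect1.
by rewrite /induced (subsetP sAB _ xA) (subsetP sAB _ yA).
Qed.

Lemma induced_path_in A x p : path (induced A) x p -> p != [::] ->
  all (mem A) (x :: p).
Proof.
elim: p x => [//|z p IH] x /= /andP[/and3P[xA zA _] pp] _.
rewrite xA /=; case: p IH pp => [|w p] IH pp; first by rewrite /= zA.
exact: (IH z pp).
Qed.

Lemma connect_induced_in A x y : connect (induced A) x y -> x != y -> y \in A.
Proof.
case/connectP=> p pp ->; case: p pp => [|z p] pp; first by rewrite eqxx.
move=> _; have /allP := induced_path_in pp isT; apply.
by rewrite mem_last.
Qed.

Lemma connect_induced_uniq A x y : connect (induced A) x y ->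
  exists2 p, path (induced A) x p & uniq (x :: p) /\ y = last x p.
Proof. by case/connectP=> p pp ->; case/shortenP: pp => p' pp' up' _; exists p'. Qed.

Definition branch A x := [set y | connect (induced A) x y].

Lemma branch_self A x : x \in branch A x.
Proof. by rewrite inE connect0. Qed.

Lemma branch_sub A x : x \in A -> branch A x \subset A.
Proof.
move=> xA; apply/subsetP=> y; rewrite inE => cxy.
by case: (eqVneq x y) => [<-//|nxy]; exact: connect_induced_in cxy nxy.
Qed.

Lemma branch_eq A x y : connect (induced A) x y -> branch A x = branch A y.
Proof.
move=> cxy; apply/setP=> z; rewrite !inE; apply/idP/idP; last exact: connect_trans.
by apply: connect_trans; rewrite (sym_connect_sym (induced_sym A)).
Qed.

Lemma no_bypass A v u w : e v u -> e v w -> u != w ->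
  ~ connect (induced (A :\ v)) u w.
Proof.
move=> evu evw nuw /connect_induced_uniq[p pp [up wl]].
have pn : p != [::] by case: p pp up wl => //= _ _ wl; rewrite wl eqxx in nuw.
have al := induced_path_in pp pn.
have vn : v \notin u :: p.
  by apply/negP => /(allP al); rewrite !inE eqxx.
have sz : 3 <= size [:: v, u & p] by case: p pn {pp up wl al vn}.
have uq : uniq [:: v, u & p] by rewrite /= -/(uniq (u :: p)) up andbT.
have := e_acy uq sz.
by rewrite /= evu /= rcons_path (sub_path (@induced_edge _) pp) -wl e_sym evw.
Qed.

Lemma first_step A u x : connect (induced A) u x -> u != x ->
  exists2 w, induced A u w & connect (induced (A :\ u)) w x.
Proof.
move=> /connect_induced_uniq[p pp [up ->]].
case: p pp up => [|w p] /=; first by rewrite eqxx.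
move=> /andP[ruw pp] /andP[un uq] _; exists w => //.
apply/connectP; exists p => //.
apply: (@sub_in_path _ (predC1 u)) pp; last first.
  by apply/allP=> z zin /=; apply/eqP=> zu; rewrite -zu zin in un.
move=> a b au bu /and3P[aA bA eab]; rewrite !inE /= in au bu.
by rewrite /induced !inE au bu aA bA eab.
Qed.

Lemma connect_avoid A x y v : connect (induced A) x y ->
  ~~ connect (induced A) x v -> connect (induced (A :\ v)) x y.
Proof.
move=> /connectP[p pp ->] nxv.
suff H a : connect (induced A) x a -> connect (induced (A :\ v)) x a ->
    path (induced A) a p -> connect (induced (A :\ v)) x (last a p).
  by apply: H => //; exact: connect0.
elim: p a {pp} => [//|b p IH] a cxa cxa' /= /andP[rab pp].
have cxb : connect (induced A) x b := connect_trans cxa (connect1 rab).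
apply: IH => //; apply: connect_trans cxa' (connect1 _).
case/and3P: rab => aA bA eab; rewrite /induced !inE aA bA eab !andbT.
by apply/andP; split; apply/eqP => h; subst; rewrite ?cxa ?cxb in nxv.
Qed.

Lemma branches_disjoint A v u w t : e v u -> e v w -> u != w ->
  t \in branch (A :\ v) w -> t \notin branch (A :\ v) u.
Proof.
move=> evu evw uw; rewrite !inE => cwt; apply/negP => cut.
apply: (no_bypass evu evw uw); apply: connect_trans cut _.
by rewrite (sym_connect_sym (induced_sym _)).
Qed.

Lemma branch_neighbor A v w y z : w \in A :\ v -> y \in branch (A :\ v) w ->
  z \in A -> e y z -> z = v \/ z \in branch (A :\ v) w.
Proof.
move=> wAv yB zA eyz; case: (eqVneq z v) => [|zv]; [by left | right].
have yAv := subsetP (branch_sub wAv) y yB.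
move: yB; rewrite !inE => cwy; apply: connect_trans cwy (connect1 _).
by rewrite /induced yAv !inE zv zA eyz.
Qed.

Lemma long_paths D x0 : x0 \in D -> (forall y, y \in D -> 2 <= #|[set z in D | e y z]|) ->
  forall n, exists x p, [/\ x \in D, all (mem D) p, path e x p, uniq (x :: p) & n <= size p].
Proof.
move=> x0D deg; elim=> [|n [x [p [xD pD pp up np]]]]; first by exists x0, [::].
have [z zN zh] : exists2 z, z \in [set z in D | e x z] & z != head x p.
  have : 0 < #|[set z in D | e x z] :\ head x p|.
    have := deg x xD; rewrite (cardsD1 (head x p)).
    by case: (head x p \in _) => //=; apply: ltnW.
  by case/card_gt0P => z; rewrite !inE => /andP[zh zN]; exists z; rewrite ?inE.
rewrite inE in zN; case/andP: zN => zD exz.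
case zin: (z \in x :: p); last first.
  by exists z, (x :: p); split; rewrite /= ?xD ?zin // e_sym exz.
exfalso; have zx : z != x by rewrite eq_sym edge_neq.
move: zin; rewrite inE (negbTE zx) /= => zp.
case/splitPr: zp pp up zh => p1 p2 pp up zh.
have p1n : p1 != [::] by case: p1 pp up zh => //=; rewrite eqxx.
have U : uniq (x :: rcons p1 z).
  have : uniq ((x :: rcons p1 z) ++ p2) by rewrite /= -cats1 -catA.
  by rewrite cat_uniq => /andP[].
have Sz : 3 <= size (x :: rcons p1 z) by rewrite /= size_rcons; case: p1 p1n {pp up zh U}.
have := e_acy U Sz; rewrite /= rcons_path rcons_path last_rcons [e z x]e_sym exz andbT.
by move: pp; rewrite cat_path /= => /and3P[-> -> _].
Qed.

Lemma forest_low_degree D x0 : x0 \in D ->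
  exists2 y, y \in D & #|[set z in D | e y z]| < 2.
Proof.
move=> x0D; apply: NNPP => low.
have deg y : y \in D -> 2 <= #|[set z in D | e y z]|.
  by move=> yD; rewrite leqNgt; apply/negP => lt2; apply: low; exists y.
have [x [p [xD pD _ up]]] := long_paths x0D deg #|D|.
rewrite leqNgt => /negP; apply.
have : size (x :: p) <= size (enum D).
  apply: uniq_leq_size => // z; rewrite inE mem_enum => /orP[/eqP->//|].
  exact: (allP pD).
by rewrite -cardE.
Qed.

Definition proper_ext S c (f : V -> color) :=
  (forall x a, x \in S -> c x = Some a -> f x = a) /\
  (forall x y, x \in S -> y \in S -> e x y -> f x <> f y).

Definition obs S c := ~ exists f, proper_ext S c f.

Definition minimal S c := forall S' : {set V}, S' \subset S -> obs S' c -> #|S| <= #|S'|.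

Definition colored_in S c := #|[set x in S | c x != None]|.

Lemma obs_mono S c1 c2 : obs S c1 ->
  (forall x a, x \in S -> c1 x = Some a -> c2 x = Some a) -> obs S c2.
Proof.
move=> o1 sub [f [fc fp]]; apply: o1; exists f; split=> // x a xS /(sub _ _ xS).
exact: fc.
Qed.

Lemma exists_minimal S c : obs S c ->
  exists2 S' : {set V}, S' \subset S & obs S' c /\ minimal S' c.
Proof.
have [n] := ubnP #|S|; elim: n S => // n IH S ltS oS.
case: (classic (minimal S c)) => [mS|nmS]; first by exists S.
have [S' [sS' oS' lt']] : exists S' : {set V}, [/\ S' \subset S, obs S' c & #|S'| < #|S|].
  apply: NNPP => none; apply: nmS => S' sS' oS'; rewrite leqNgt; apply/negP => lt'.
  by apply: none; exists S'.
have [S'' s'' [o'' m'']] := IH S' (leq_trans lt' (ltnSE ltS)) oS'.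
by exists S'' => //; exact: subset_trans s'' sS'.
Qed.

(* Gluing: the colourings of v plus each branch at a coloured vertex v combine
   into one of S, so some branch together with v is already an obstruction. *)
Lemma glue S c v a : v \in S -> c v = Some a -> obs S c ->
  exists2 x, x \in S :\ v & obs (v |: branch (S :\ v) x) c.
Proof.
move=> vS cv oS; apply: NNPP => no_glue.
pose ok C f := forall x, x \in S :\ v -> C = branch (S :\ v) x -> proper_ext (v |: C) c f.
have /choice[g gP] : forall C, exists f, ok C f.
  move=> C; rewrite /ok.
  case: (classic (exists2 x, x \in S :\ v & C = branch (S :\ v) x)) => [[x xS ->]|nC].
    have [f fP] : exists f, proper_ext (v |: branch (S :\ v) x) c f.
      by apply: NNPP => o; apply: no_glue; exists x.
    by exists f.
  by exists (fun _ => ord0) => y yS Cy; exfalso; apply: nC; exists y.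
rewrite /ok {ok} in gP.
have gv x : x \in S :\ v -> g (branch (S :\ v) x) v = a.
  by move=> xS; have [gc _] := gP _ x xS erefl; apply: gc cv; rewrite setU11.
pose F y := if y == v then a else g (branch (S :\ v) y) y.
apply: oS; exists F; split.
  move=> x b xS cx; rewrite /F; case: (eqVneq x v) => [xv|xv].
    by move: cx; rewrite xv cv => -[].
  have xS' : x \in S :\ v by rewrite !inE xv xS.
  have [gc _] := gP _ x xS' erefl.
  by apply: gc cx; apply/setU1r/branch_self.
have edge_v y : y \in S -> e v y -> a <> F y.
  move=> yS evy; have yS' := neighbor_D1 yS evy.
  rewrite /F eq_sym (negbTE (edge_neq evy)) -{1}(gv y yS').
  have [_ gp] := gP _ y yS' erefl.
  exact: (gp _ _ (setU11 _ _) (setU1r _ (branch_self _ _)) evy).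
move=> x y xS yS exy; rewrite {1}/F; case: (eqVneq x v) => [xv|xv].
  by rewrite xv in exy; exact: edge_v.
rewrite /F; case: (eqVneq y v) => [yv|yv].
  by rewrite yv e_sym in exy; move=> h; apply: (edge_v x xS exy); rewrite /F (negbTE xv) h.
have xS' : x \in S :\ v by rewrite !inE xv xS.
have yS' : y \in S :\ v by rewrite !inE yv yS.
have rxy : induced (S :\ v) x y by rewrite /induced xS' yS' exy.
rewrite -(branch_eq (connect1 rxy)).
have [_ gp] := gP _ x xS' erefl.
apply: (gp _ _ (setU1r _ (branch_self _ _)) _ exy).
by apply/setU1r; rewrite inE connect1.
Qed.

Lemma obs_isolated C c v a : v \notin C -> c v = Some a -> obs (v |: C) c ->
  (forall y, y \in C -> ~~ e v y) -> obs C c.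
Proof.
move=> vC cv o iso [f [fc fp]]; apply: o.
exists (fun y => if y == v then a else f y); split.
  move=> x b; rewrite in_setU1; case: (eqVneq x v) => [->|xv] /=.
    by rewrite cv => _ [].
  exact: fc.
move=> x y; rewrite !in_setU1.
case: (eqVneq x v) => [->|xv]; case: (eqVneq y v) => [->|yv] //=.
- by rewrite e_irr.
- by move=> _ yC; rewrite (negbTE (iso y yC)).
- by move=> xC _; rewrite e_sym (negbTE (iso x xC)).
- exact: fp.
Qed.

Lemma glue_neighbor S c c' v a : minimal S c -> v \in S -> c' v = Some a -> obs S c' ->
  (forall x, x \in S -> x != v -> c' x = c x) ->
  exists2 u, (u \in S) && e v u & obs (v |: branch (S :\ v) u) c'.
Proof.
move=> mS vS cv oS agree.
have [x xS o] := glue vS cv oS.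
have bsub : branch (S :\ v) x \subset S :\ v by apply: branch_sub.
case: (boolP [exists y in branch (S :\ v) x, e v y]).
  case/exists_inP => y yb evy; exists y.
    by move/subsetP: bsub => /(_ y yb); rewrite !inE evy => /andP[_ ->].
  by rewrite -(branch_eq (A := S :\ v) (x := x)) //; rewrite inE in yb.
move/exists_inPn => iso; exfalso.
have vb : v \notin branch (S :\ v) x by apply/negP => /(subsetP bsub); rewrite !inE eqxx.
have o2 : obs (branch (S :\ v) x) c.
  apply: (obs_mono (obs_isolated vb cv o iso)) => y b yb.
  by move/subsetP: bsub => /(_ y yb); rewrite !inE => /andP[yv yS]; rewrite agree.
have := mS _ (subset_trans bsub (subD1set S v)) o2.
have := subset_leq_card bsub; rewrite (cardsD1 v S) vS.
by move=> h1 h2; have := leq_trans h2 h1; rewrite ltnn.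
Qed.

Lemma missing_color (I : {set color}) : #|I| < 3 -> exists a, a \notin I.
Proof.
move=> small; have : 0 < #|~: I| by have := cardsC I; rewrite card_ord; lia.
by case/card_gt0P => a; rewrite inE; exists a.
Qed.

(* In a minimal obstruction every uncoloured vertex has three neighbours:
   otherwise a colour missing on its neighbours extends a colouring of S \ y. *)
Lemma uncolored_degree S c y : obs S c -> minimal S c -> y \in S -> c y = None ->
  3 <= #|[set z in S | e y z]|.
Proof.
move=> oS mS yS cy; rewrite leqNgt; apply/negP => small.
have [f [fc fp]] : exists f, proper_ext (S :\ y) c f.
  apply: NNPP => o; have := mS _ (subD1set S y) o.
  by rewrite (cardsD1 y S) yS ltnn.
pose I := [set f z | z in [set z in S | e y z]].
have [a aI] : exists a, a \notin I.
  by apply: missing_color; apply: leq_ltn_trans (leq_imset_card _ _) small.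
have aN z : z \in S -> e y z -> f z <> a.
  by move=> zS eyz fz; case/negP: aI; apply/imsetP; exists z; rewrite ?inE ?zS.
apply: oS; exists (fun z => if z == y then a else f z); split.
  move=> x b xS; case: (eqVneq x y) => [->|xy]; first by rewrite cy.
  by apply: fc; rewrite !inE xy.
move=> x z xS zS exz.
case: (eqVneq x y) => [xy|xy]; case: (eqVneq z y) => [zy|zy].
- by rewrite xy zy e_irr in exz.
- by rewrite xy in exz; move=> h; apply: (aN z zS exz).
- by rewrite zy e_sym in exz; exact: aN.
- by apply: fp; rewrite // !inE ?xy ?zy.
Qed.

Lemma some_uncolored S c : proper_pc e c -> obs S c ->
  exists2 y, y \in S & c y = None.
Proof.
move=> pc oS; apply: NNPP => allc; apply: oS.
have col x : x \in S -> exists b, c x = Some b.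
  move=> xS; case cx: (c x) => [b|]; first by exists b.
  by case: allc; exists x.
exists (fun x => odflt ord0 (c x)); split; first by move=> x a _ ->.
move=> x y xS yS exy; have [a cx] := col x xS; have [b cy] := col y yS.
by rewrite cx cy /=; exact: pc exy cx cy.
Qed.

Lemma obstruction_size S c : proper_pc e c -> obs S c -> minimal S c -> 4 <= #|S|.
Proof.
move=> pc oS mS; have [y yS cy] := some_uncolored pc oS.
have := uncolored_degree oS mS yS cy.
have : [set z in S | e y z] \subset S :\ y.
  by apply/subsetP => z; rewrite !inE => /andP[-> eyz]; rewrite andbT eq_sym edge_neq.
move/subset_leq_card; rewrite (cardsD1 y S) yS => h1 h2.
exact: leq_trans h2 h1.
Qed.

Lemma branch_pair_card S u v : u \in S -> v \in S -> e v u ->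
  #|branch (S :\ v) u| + #|branch (S :\ u) v| <= #|S|.
Proof.
move=> uS vS evu; have evu' : e u v by rewrite e_sym.
have s1 := subset_trans (branch_sub (neighbor_D1 uS evu)) (subD1set S v).
have s2 := subset_trans (branch_sub (neighbor_D1 vS evu')) (subD1set S u).
have dj : branch (S :\ v) u :&: branch (S :\ u) v = set0.
  apply/setP => x; rewrite !inE; apply/negP => /andP[cux cvx].
  case: (eqVneq u x) => [ux|ux].
    by rewrite -ux in cvx; have := connect_induced_in cvx (edge_neq evu); rewrite !inE eqxx.
  have [w /and3P[_ wS euw] cwx] := first_step cux ux.
  have wv : v != w by move: wS; rewrite !inE eq_sym => /andP[].
  apply: (no_bypass evu' euw wv); apply: connect_trans cvx _.
  rewrite (sym_connect_sym (induced_sym _)); apply: connect_induced_mono cwx.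
  by apply/subsetP => z; rewrite !inE => /and3P[-> _ ->]; rewrite andbT.
have sU : branch (S :\ v) u :|: branch (S :\ u) v \subset S by rewrite subUset s1 s2.
by have := subset_leq_card sU; rewrite cardsU dj cards0 subn0.
Qed.

Lemma branch_shrink S u v w : u \in S -> v \in S -> w \in S -> e v u -> e u w ->
  w != v -> #|branch (S :\ u) w| < #|branch (S :\ v) u|.
Proof.
move=> uS vS wS evu euw wv; apply: proper_card; apply/properP; split.
  apply/subsetP => y; rewrite !inE => cwy.
  have ncv : ~~ connect (induced (S :\ u)) w v.
    by apply/negP; apply: (no_bypass (v := u)); rewrite // e_sym.
  have ruw : induced (S :\ v) u w.
    by rewrite /induced !inE uS wS euw eq_sym (edge_neq evu) wv.
  apply: connect_trans (connect1 ruw) (connect_induced_mono _ (connect_avoid cwy ncv)).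
  by apply/subsetP => z; rewrite !inE => /and3P[-> _ ->].
exists u; first exact: branch_self.
by apply/negP => /(subsetP (branch_sub (neighbor_D1 wS euw))); rewrite !inE eqxx.
Qed.

(* Every nonempty S has a centroid: a vertex whose branches have at most half
   of the vertices of S.  Take v minimising its largest branch. *)
Lemma centroid S x0 : x0 \in S -> exists2 v, v \in S &
  forall u, u \in S -> e v u -> 2 * #|branch (S :\ v) u| <= #|S|.
Proof.
move=> x0S.
pose big v := \max_(u | (u \in S) && e v u) #|branch (S :\ v) u|.
have [v vS vmin] := arg_minnP big x0S.
exists v => // u uS evu; rewrite leqNgt; apply/negP => large.
have le_v : #|branch (S :\ v) u| <= big v.
  by apply: (leq_bigmax_cond (F := fun u => #|branch (S :\ v) u|)); rewrite uS evu.
have lt_u : big u <= #|branch (S :\ v) u| - 1.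
  apply/bigmax_leqP => w /andP[wS euw].
  case: (eqVneq w v) => [->|wv]; first by have := branch_pair_card uS vS evu; lia.
  by have := branch_shrink uS vS wS evu euw wv; lia.
by have := vmin u uS; lia.
Qed.

Lemma colored_sub A B c : A \subset B -> colored_in A c <= colored_in B c.
Proof.
move=> sAB; apply: subset_leq_card; apply/subsetP => x; rewrite !inE => /andP[xA ->].
by rewrite (subsetP sAB _ xA).
Qed.

Lemma colored_setU1 v A c : colored_in (v |: A) c <= colored_in A c + 1.
Proof.
have : [set x in v |: A | c x != None] \subset v |: [set x in A | c x != None].
  by apply/subsetP => x; rewrite !inE => /andP[/orP[->//|xA] cx]; rewrite xA cx orbT.
move/subset_leq_card; rewrite cardsU1 /colored_in.
by have := leq_b1 (v \notin [set x in A | c x != None]); lia.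
Qed.

Lemma colored_agree A c1 c2 : {in A, c1 =1 c2} -> colored_in A c1 = colored_in A c2.
Proof.
move=> agree; apply: eq_card => x; rewrite !inE.
by case: (boolP (x \in A)) => //= /agree ->.
Qed.

(* Every branch at a vertex of a minimal obstruction contains a coloured
   vertex: otherwise a vertex of degree at most one in the branch would be an
   uncoloured vertex of degree at most two in S. *)
Lemma branch_has_colored S c v w : obs S c -> minimal S c -> w \in S -> e v w ->
  exists2 t, t \in branch (S :\ v) w & c t != None.
Proof.
move=> oS mS wS evw; have wSv := neighbor_D1 wS evw.
set D := branch (S :\ v) w; apply: NNPP => nocol.
have [y yD low] := forest_low_degree (branch_self (S :\ v) w).
rewrite -/D in yD low.
have yS : y \in S by have := subsetP (branch_sub wSv) y yD; rewrite inE => /andP[].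
have cy : c y = None by case E: (c y) => [b|] //; case: nocol; exists y; rewrite ?E.
have := uncolored_degree oS mS yS cy.
have : [set z in S | e y z] \subset v |: [set z in D | e y z].
  apply/subsetP => z; rewrite inE => /andP[zS eyz]; rewrite in_setU1 in_set.
  by case: (branch_neighbor wSv yD zS eyz) => [->|->]; rewrite ?eqxx ?eyz ?orbT.
move/subset_leq_card; rewrite cardsU1 => h1 h2.
by have := leq_trans h2 h1; have := leq_b1 (v \notin [set z in D | e y z]); lia.
Qed.

(* At an uncoloured vertex v of a minimal obstruction S, each branch misses a
   coloured vertex of S, found in another branch (v has degree at least 3). *)
Lemma branch_fewer_colored S c v u : obs S c -> minimal S c -> v \in S ->
  c v = None -> u \in S -> e v u -> colored_in (branch (S :\ v) u) c < colored_in S c.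
Proof.
move=> oS mS vS cv uS evu.
have [w /andP[wS evw] wu] : exists2 w, (w \in S) && e v w & w != u.
  have : 0 < #|[set z in S | e v z] :\ u|.
    have := uncolored_degree oS mS vS cv; rewrite (cardsD1 u).
    by have := leq_b1 (u \in [set z in S | e v z]); lia.
  by case/card_gt0P => w; rewrite !inE => /and3P[wu wS evw]; exists w; rewrite ?wS.
have [t tD ct] := branch_has_colored oS mS wS evw.
have tS : t \in S.
  by have := subsetP (branch_sub (neighbor_D1 wS evw)) t tD; rewrite inE => /andP[].
have tB : t \notin branch (S :\ v) u by apply: branches_disjoint tD; rewrite // eq_sym.
apply: proper_card; apply/properP; split.
  apply/subsetP => z; rewrite inE => /andP[zB cz]; rewrite inE cz andbT.
  by have := subsetP (branch_sub (neighbor_D1 uS evu)) z zB; rewrite inE => /andP[].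
by exists t; rewrite inE ?tS ?ct // (negbTE tB).
Qed.

(* A centroid of a minimal obstruction for a proper colouring is uncoloured:
   gluing would give a smaller obstruction of at most |S|/2 + 1 vertices. *)
Lemma centroid_uncolored S c v : proper_pc e c -> obs S c -> minimal S c -> v \in S ->
  (forall u, u \in S -> e v u -> 2 * #|branch (S :\ v) u| <= #|S|) -> c v = None.
Proof.
move=> pc oS mS vS small; case cv: (c v) => [a|] //; exfalso.
have [u /andP[uS evu] o] := glue_neighbor mS vS cv oS (fun _ _ _ => erefl).
have sub : v |: branch (S :\ v) u \subset S.
  by rewrite subUset sub1set vS (subset_trans (branch_sub (neighbor_D1 uS evu)) (subD1set S v)).
have := mS _ sub o; have := obstruction_size pc oS mS; have := small u uS evu.
by rewrite cardsU1; have := leq_b1 (v \notin branch (S :\ v) u); lia.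
Qed.

Lemma next_obstruction S c c' v a : obs S c -> minimal S c -> v \in S -> c v = None ->
  (forall u, u \in S -> e v u -> 2 * #|branch (S :\ v) u| <= #|S|) ->
  c' v = Some a -> (forall x, x \in S -> x != v -> c' x = c x) ->
  exists S', [/\ obs S' c', minimal S' c', colored_in S' c' <= colored_in S c
               & 2 * #|S'| <= #|S| + 2].
Proof.
move=> oS mS vS cv small cv' agree.
have oS' : obs S c'.
  apply: (obs_mono oS) => x b xS cx; rewrite agree //.
  by apply/eqP => xv; move: cx; rewrite xv cv.
have [u /andP[uS evu] o] := glue_neighbor mS vS cv' oS' agree.
have [S' sS' [o' m']] := exists_minimal o.
set B := branch (S :\ v) u.
have BSv : B \subset S :\ v := branch_sub (neighbor_D1 uS evu).
have eqB : colored_in B c' = colored_in B c.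
  by apply: colored_agree => x /(subsetP BSv); rewrite !inE => /andP[xv xS]; apply: agree.
exists S'; split=> //.
  apply: leq_trans (colored_sub c' sS') _; apply: leq_trans (colored_setU1 v B c') _.
  by rewrite eqB addn1; exact: branch_fewer_colored.
have := subset_leq_card sS'; rewrite cardsU1; have := small u uS evu.
by have := leq_b1 (v \notin B); lia.
Qed.

Definition restrict S c : pcoloring V := fun x => if x \in S then c x else None.

Lemma restrict_erasure S c : erasure_of c (restrict S c).
Proof. by move=> x; rewrite /restrict; case: (x \in S); [left | right]. Qed.

Lemma restrict_colored S c v a :
  num_colored (set_color (restrict S c) v a) <= colored_in S c + 1.
Proof.
have : [pred x | set_color (restrict S c) v a x != None] \subset
       v |: [set x in S | c x != None].
  by apply/subsetP => x; rewrite !inE /set_color /restrict; case: (x == v); case: (x \in S).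
move/subset_leq_card => h; apply: leq_trans h _.
by rewrite cardsU1 /colored_in addnC leq_add2l leq_b1.
Qed.

Lemma restrict_agree S c v a x : x \in S -> x != v ->
  set_color (restrict S c) v a x = c x.
Proof. by move=> xS xv; rewrite /set_color (negbTE xv) /restrict xS. Qed.

Lemma spoiler_wins_obstruction k r c S : obs S c -> minimal S c ->
  colored_in S c < k -> #|S| <= 2 ^ r + 2 -> spoiler_wins e k r c.
Proof.
elim: r c S => [|r IH] c S oS mS ck sS;
  (case: (classic (proper_pc e c)) => pc; last by left).
  by have := obstruction_size pc oS mS; rewrite expn0 in sS; lia.
right; have [x0 x0S _] := some_uncolored pc oS.
have [v vS small] := centroid x0S.
have cv := centroid_uncolored pc oS mS vS small.
exists (restrict S c), v; split; first exact: restrict_erasure.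
split=> a; first by have := restrict_colored S c v a; lia.
have cv' : set_color (restrict S c) v a v = Some a by rewrite /set_color eqxx.
have [S' [o' m' cS' sS']] := next_obstruction oS mS vS cv small cv' (@restrict_agree S c v a).
by apply: IH o' m' _ _; [lia | rewrite expnS in sS; lia].
Qed.

End ForestGame.

Theorem lemma8 (k r : nat) (V : finType) (e : rel V)
  (e_sym : symmetric e) (e_irr : irreflexive e)
  (T_tree : is_tree e)
  (n_le : #|V| <= 2 ^ r + 2)
  (l_lt : num_leaves e < k)
  (c0 : pcoloring V)
  (c0_leaves : forall x, (c0 x != None) = is_leaf e x)
  (no_ext : ~ exists f : V -> color, extends f c0 /\ proper_total e f) :
  spoiler_wins e k r c0.
Proof.
have [_ e_acy] := T_tree.
have oV : obs e [set: V] c0.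
  by case=> f [fc fp]; apply: no_ext; exists f; split=> [x a|x y]; [exact: fc | exact: fp].
have [S _ [oS mS]] := exists_minimal oV.
apply: (spoiler_wins_obstruction e_sym e_irr e_acy oS mS).
- (* its coloured vertices are leaves *)
  apply: leq_ltn_trans l_lt; apply: subset_leq_card; apply/subsetP => x.
  by rewrite !inE c0_leaves => /andP[].
- exact: leq_trans (max_card _) n_le.
Qed.
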